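(* Let $A$ be a connected monounary algebra. Then there exists $B\in\mathbf R(A)\cap\mathcal U^\bigstar_c$ with $\mathbf V(A)=\mathbf V(B)$.
   Context: A monounary algebra is a pair $(A,f)$ with $A$ a nonempty set and $f:A\to A$; a partial monounary algebra allows $f$ to be partial. Direct products are coordinatewise. It is connected if for all $x,y$ there are $m,n\ge0$ with $f^m(x)=f^n(y)$. A retract of $A$ is a nonempty subalgebra $M$ such that there is an endomorphism $h:A\to M$ with $h|_M=\mathrm{id}$; $\mathbf R(A)$ is the class of algebras isomorphic to a retract of $A$. A retract variety is a class closed under isomorphisms, retracts and direct products; $\mathbf V(\mathcal K)$ is the smallest retract variety containing $\mathcal K$. For $x\in A$: $f^{-1}(x)=\{y:f(y)=x\}$, $f^{-n}(x)=\bigcup_{z\in f^{-(n-1)}(x)}f^{-1}(z)$, $P(x)=\{x\}\cup\bigcup_{n\ge1}f^{-n}(x)$, regarded as a partial monounary algebra with $f$ restricted to those $y\in P(x)$ with $f(y)\in P(x)$. Condition ($\bigstar$) on $(A,f)$: whenever $x_1,x_2,x_3\in A$ with $f(x_1)=f(x_2)=f(x_3)$ and $P(x_1),P(x_2),P(x_3)$ pairwise isomorphic, then $|\{x_1,x_2,x_3\}|\le2$. $\mathcal U^\bigstar_c$ is the class of connected monounary algebras satisfying ($\bigstar$). *)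

From Stdlib Require Import Arith ClassicalEpsilon.

Set Implicit Arguments.

Record alg := Alg {
  carrier :> Type;
  op : carrier -> carrier;
  nonempty : inhabited carrier
}.

Arguments op {a} _.

Fixpoint iter {T : Type} (n : nat) (f : T -> T) (x : T) : T :=
  match n with 0 => x | S k => f (iter k f x) end.

Definition is_hom {A B : alg} (h : A -> B) : Prop :=
  forall x, h (op x) = op (h x).

Definition iso (A B : alg) : Prop :=
  exists (h : A -> B) (g : B -> A),
    is_hom h /\ is_hom g /\ (forall x, g (h x) = x) /\ (forall y, h (g y) = y).

Definition subalg {A : alg} (S : A -> Prop)
  (cl : forall x, S x -> S (op x)) (ne : exists x, S x) : alg :=
  @Alg {x : A | S x}
       (fun p => exist S (op (proj1_sig p)) (cl _ (proj2_sig p)))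
       (match ne with ex_intro _ x Hx => inhabits (exist S x Hx) end).

Definition retract_set {A : alg} (S : A -> Prop) : Prop :=
  exists h : A -> A, is_hom h /\ (forall x, S (h x)) /\ (forall x, S x -> h x = x).

Definition R (A B : alg) : Prop :=
  exists (S : A -> Prop) (cl : forall x, S x -> S (op x)) (ne : exists x, S x),
    retract_set S /\ iso B (@subalg A S cl ne).

Definition prod_alg (I : Type) (F : I -> alg) : alg :=
  @Alg (forall i, F i) (fun x i => op (x i))
       (inhabits (fun i => epsilon (nonempty (F i)) (fun _ => True))).

Definition retract_variety (C : alg -> Prop) : Prop :=
  (forall A B, C A -> iso A B -> C B) /\
  (forall A B, C A -> R A B -> C B) /\
  (forall (I : Type) (F : I -> alg), (forall i, C (F i)) -> C (prod_alg F)).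

Definition V (K : alg -> Prop) (B : alg) : Prop :=
  forall C, retract_variety C -> (forall A, K A -> C A) -> C B.

Definition single (A : alg) : alg -> Prop := fun X => X = A.

Definition connected (A : alg) : Prop :=
  forall x y : A, exists m n, iter m op x = iter n op y.

(* y belongs to P(x) = {x} ∪ ⋃_{n>=1} f^{-n}(x) *)
Definition inP {A : alg} (x y : A) : Prop := exists n, iter n op y = x.

(* P(x1) and P(x2) are isomorphic as partial monounary algebras
   (f restricted to those y with f y in P(x)); maps are represented by
   functions A -> A whose values matter only on P(x1), P(x2). *)
Definition P_iso {A : alg} (x1 x2 : A) : Prop :=
  exists phi psi : A -> A,
    (forall y, inP x1 y -> inP x2 (phi y)) /\
    (forall y, inP x2 y -> inP x1 (psi y)) /\
    (forall y, inP x1 y -> psi (phi y) = y) /\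
    (forall y, inP x2 y -> phi (psi y) = y) /\
    (forall y, inP x1 y -> inP x1 (op y) ->
        inP x2 (op (phi y)) /\ phi (op y) = op (phi y)) /\
    (forall y, inP x2 y -> inP x2 (op y) ->
        inP x1 (op (psi y)) /\ psi (op y) = op (psi y)).

Definition star (A : alg) : Prop :=
  forall x1 x2 x3 : A, op x1 = op x2 -> op x2 = op x3 ->
    P_iso x1 x2 -> P_iso x1 x3 -> P_iso x2 x3 ->
    x1 = x2 \/ x1 = x3 \/ x2 = x3.

Definition Ustar_c (A : alg) : Prop := connected A /\ star A.

From Stdlib Require Import Arith Lia Wf_nat ClassicalEpsilon ProofIrrelevance
  FunctionalExtensionality PropExtensionality Classical.

(* Call two points bisimilar when their preimage trees agree once the number of
   preimages is counted only up to two; siblings with isomorphic P(x) are equal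
   or bisimilar.  Fix a trunk (a cycle, or a ray if A has no cycle) and keep, in
   every set of siblings, the trunk element and at most two representatives of
   each bisimilarity class.  The kept points B form a retract of A, and B
   satisfies (★) because bisimilarity in B implies bisimilarity in A.  Varying
   which representatives are used gives retractions A -> B separating the points
   of A, so A embeds in a power of B; the image is a retract, since every point
   of the power can be pulled back along preimages bisimilar to a fixed
   coordinate.  Hence B ∈ R(A) and A ∈ R(B^I), so V(A) = V(B). *)

Lemma iter_succ_r {T : Type} n (f : T -> T) x : iter n f (f x) = f (iter n f x).
Proof. induction n; simpl; congruence. Qed.

Lemma iter_add {T : Type} m n (f : T -> T) x :
  iter (m + n) f x = iter m f (iter n f x).
Proof. induction m; simpl; congruence. Qed.

Definition least_nat (P : nat -> Prop) : nat :=
  epsilon (inhabits 0) (fun n => P n /\ forall m, P m -> n <= m).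

Lemma least_nat_spec (P : nat -> Prop) :
  (exists n, P n) -> P (least_nat P) /\ forall m, P m -> least_nat P <= m.
Proof.
  intro HP. apply (epsilon_spec (inhabits 0) (fun n => P n /\ forall m, P m -> n <= m)).
  destruct (dec_inh_nat_subset_has_unique_least_element P (fun n => classic (P n)) HP)
    as [n [Hn _]].
  exists n; exact Hn.
Qed.

Lemma subalg_eq (X : alg) (S : X -> Prop) cl ne (p q : subalg S cl ne) :
  proj1_sig p = proj1_sig q -> p = q.
Proof.
  destruct p as [x px], q as [y py]; simpl; intros ->. f_equal. apply proof_irrelevance.
Qed.

Lemma subalg_iter (X : alg) (S : X -> Prop) cl ne (s : subalg S cl ne) n :
  proj1_sig (iter n op s) = iter n op (proj1_sig s).
Proof. induction n as [|n IH]; simpl; [reflexivity|]. rewrite <- IH. reflexivity. Qed.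

Section Distance.
Variables (X : alg) (Q : X -> Prop).

Definition reaches (y : X) : Prop := exists n, Q (iter n op y).
Definition dist (y : X) : nat := least_nat (fun n => Q (iter n op y)).

Lemma dist_spec y : reaches y ->
  Q (iter (dist y) op y) /\ forall m, Q (iter m op y) -> dist y <= m.
Proof. apply least_nat_spec. Qed.

Lemma dist_0 y : Q y -> dist y = 0.
Proof.
  intro Hy. destruct (dist_spec y (ex_intro _ 0 Hy)) as [_ Hmin].
  specialize (Hmin 0 Hy). lia.
Qed.

Lemma dist_0_inv y : reaches y -> dist y = 0 -> Q y.
Proof. intros Hy H0. destruct (dist_spec y Hy) as [HQ _]. rewrite H0 in HQ. exact HQ. Qed.

Lemma reaches_op_inv y : reaches (op y) -> reaches y.
Proof. intros [n Hn]. exists (S n). simpl. rewrite <- iter_succ_r. exact Hn. Qed.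

Lemma reaches_op y : (forall x, Q x -> Q (op x)) -> reaches y -> reaches (op y).
Proof. intros HQ [n Hn]. exists n. rewrite iter_succ_r. apply HQ, Hn. Qed.

Lemma dist_succ y n : reaches y -> dist y = S n -> dist (op y) = n.
Proof.
  intros Hy Hd. destruct (dist_spec y Hy) as [Qy miny].
  rewrite Hd in Qy. simpl in Qy. rewrite <- iter_succ_r in Qy.
  destruct (dist_spec (op y) (ex_intro _ n Qy)) as [Qop minop].
  specialize (minop n Qy).
  assert (Q (iter (S (dist (op y))) op y)) as Qop'
    by (simpl; rewrite <- iter_succ_r; exact Qop).
  specialize (miny _ Qop'). lia.
Qed.

End Distance.

Section Bisimulation.
Variable X : alg.
Implicit Types (E F : X -> X -> Prop) (a b c : X).

Definition forth2_at E a b : Prop :=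
  (forall a', op a' = a -> exists b', op b' = b /\ E a' b') /\
  (forall a1 a2, op a1 = a -> op a2 = a -> a1 <> a2 ->
     exists b1 b2, op b1 = b /\ op b2 = b /\ b1 <> b2 /\ E a1 b1 /\ E a2 b2).

Definition forth2 E : Prop := forall a b, E a b -> forth2_at E a b.
Definition bisim2 E : Prop := forth2 E /\ forth2 (fun a b => E b a).
Definition bisimilar a b : Prop := exists E, bisim2 E /\ E a b.

Lemma forth2_at_mono E F a b :
  (forall x y, E x y -> F x y) -> forth2_at E a b -> forth2_at F a b.
Proof.
  intros EF [H1 H2]. split.
  - intros a' Ha'. destruct (H1 a' Ha') as [b' [Hb' Hab']]. exists b'. auto.
  - intros a1 a2 Ha1 Ha2 Hne.
    destruct (H2 a1 a2 Ha1 Ha2 Hne) as [b1 [b2 [Hb1 [Hb2 [Hbne [E1 E2]]]]]].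
    exists b1, b2. repeat split; auto.
Qed.

Lemma forth2_at_refl E : (forall x, E x x) -> forall a, forth2_at E a a.
Proof.
  intros HE a. split.
  - intros a' Ha'. exists a'. auto.
  - intros a1 a2 Ha1 Ha2 Hne. exists a1, a2. repeat split; auto.
Qed.

Lemma forth2_at_comp E F a b c :
  forth2_at E a b -> forth2_at F b c ->
  forth2_at (fun x z => exists y, E x y /\ F y z) a c.
Proof.
  intros [E1 E2] [F1 F2]. split.
  - intros a' Ha'. destruct (E1 a' Ha') as [b' [Hb' Eab]].
    destruct (F1 b' Hb') as [c' [Hc' Fbc]]. exists c'. eauto.
  - intros a1 a2 Ha1 Ha2 Hne.
    destruct (E2 a1 a2 Ha1 Ha2 Hne) as [b1 [b2 [Hb1 [Hb2 [Hbne [Eab1 Eab2]]]]]].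
    destruct (F2 b1 b2 Hb1 Hb2 Hbne) as [c1 [c2 [Hc1 [Hc2 [Hcne [Fbc1 Fbc2]]]]]].
    exists c1, c2. repeat split; eauto.
Qed.

Lemma bisimilar_refl a : bisimilar a a.
Proof.
  exists eq. split; [split|reflexivity];
    intros x y Hxy; subst y; apply forth2_at_refl; reflexivity.
Qed.

Lemma bisimilar_sym a b : bisimilar a b -> bisimilar b a.
Proof.
  intros [E [[HE HE'] Hab]]. exists (fun x y => E y x). split; [split|]; assumption.
Qed.

Lemma bisimilar_forth : forth2 bisimilar.
Proof.
  intros a b [E [HE Hab]]. apply (forth2_at_mono E); [|exact (proj1 HE a b Hab)].
  intros x y Hxy. exists E. split; assumption.
Qed.

Lemma bisimilar_trans a b c : bisimilar a b -> bisimilar b c -> bisimilar a c.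
Proof.
  intros Hab Hbc.
  pose (Rel := fun x z => exists y, bisimilar x y /\ bisimilar y z).
  assert (HR : forth2 Rel).
  { intros x z [y [Hxy Hyz]].
    exact (forth2_at_comp _ _ _ _ _ (bisimilar_forth _ _ Hxy) (bisimilar_forth _ _ Hyz)). }
  exists Rel. split; [split|exists b; auto].
  - exact HR.
  - intros x z [y [Hzy Hyx]]. apply (forth2_at_mono Rel).
    + intros u v [w [Huw Hwv]]. exists w. split; apply bisimilar_sym; assumption.
    + apply HR. exists y. split; apply bisimilar_sym; assumption.
Qed.

Lemma bisimilar_class a b : bisimilar a b -> bisimilar a = bisimilar b.
Proof.
  intro Hab. apply functional_extensionality. intro c.
  apply propositional_extensionality. split; intro H.
  - exact (bisimilar_trans _ _ _ (bisimilar_sym _ _ Hab) H).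
  - exact (bisimilar_trans _ _ _ Hab H).
Qed.

Lemma bisimilar_child c z : bisimilar c (op z) -> exists w, op w = c /\ bisimilar z w.
Proof.
  intro H. destruct (bisimilar_forth _ _ (bisimilar_sym _ _ H)) as [H1 _].
  exact (H1 z eq_refl).
Qed.

End Bisimulation.

Section IsomorphicSiblings.
Variable X : alg.

Definition on_cycle (x : X) : Prop := exists n, iter (S n) op x = x.

Lemma inP_refl (x : X) : inP x x.
Proof. exists 0. reflexivity. Qed.

Lemma inP_child (x a a' : X) : inP x a -> op a' = a -> inP x a'.
Proof. intros [n Hn] Ha'. exists (S n). simpl. rewrite <- iter_succ_r, Ha'. exact Hn. Qed.

Lemma on_cycle_siblings_eq (x1 x2 : X) :
  op x1 = op x2 -> on_cycle x1 -> on_cycle x2 -> x1 = x2.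
Proof.
  intros Hop [n Hn] [m Hm].
  simpl in Hn, Hm. rewrite <- iter_succ_r in Hn, Hm. rewrite <- Hop in Hm.
  assert (Hc : iter (S m) op (op x1) = op x1) by (simpl; rewrite Hm; symmetry; exact Hop).
  transitivity (iter n op (iter (S m) op (op x1))); [rewrite Hc; symmetry; exact Hn|].
  rewrite <- iter_add. replace (n + S m) with (m + S n) by lia.
  rewrite iter_add. simpl. rewrite Hn. exact Hm.
Qed.

Definition P_iso_by (x1 x2 : X) (phi psi : X -> X) : Prop :=
  (forall y, inP x1 y -> inP x2 (phi y)) /\
  (forall y, inP x2 y -> inP x1 (psi y)) /\
  (forall y, inP x1 y -> psi (phi y) = y) /\
  (forall y, inP x2 y -> phi (psi y) = y) /\
  (forall y, inP x1 y -> inP x1 (op y) ->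
     inP x2 (op (phi y)) /\ phi (op y) = op (phi y)) /\
  (forall y, inP x2 y -> inP x2 (op y) ->
     inP x1 (op (psi y)) /\ psi (op y) = op (psi y)).

Lemma P_iso_by_sym x1 x2 phi psi : P_iso_by x1 x2 phi psi -> P_iso_by x2 x1 psi phi.
Proof. intros (H1 & H2 & H3 & H4 & H5 & H6). unfold P_iso_by. tauto. Qed.

Section IsomorphismMaps.
Variables (x1 x2 : X) (phi psi : X -> X).
Hypothesis Hiso : P_iso_by x1 x2 phi psi.

Lemma P_iso_by_root : ~ on_cycle x1 -> phi x1 = x2.
Proof.
  destruct Hiso as (maps1 & _ & inv1 & _ & _ & hom2). intro Hnc.
  destruct (maps1 x1 (inP_refl x1)) as [[|m] Hm]; [exact Hm|].
  exfalso. apply Hnc.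
  assert (Hop : inP x2 (op (phi x1))) by (exists m; rewrite iter_succ_r; exact Hm).
  destruct (hom2 (phi x1) (ex_intro _ (S m) Hm) Hop) as [[n Hn] _].
  rewrite inv1 in Hn by apply inP_refl.
  exists n. simpl. rewrite <- iter_succ_r. exact Hn.
Qed.

Lemma P_iso_by_forth2 : forth2 X (fun a b => inP x1 a /\ b = phi a).
Proof.
  destruct Hiso as (maps1 & _ & inv1 & _ & hom1 & _).
  assert (child : forall a a', inP x1 a -> op a' = a -> inP x1 a' /\ op (phi a') = phi a).
  { intros a a' Ha Ha'. assert (Ha'1 : inP x1 a') by exact (inP_child _ _ _ Ha Ha').
    split; [exact Ha'1|]. rewrite <- Ha' in Ha.
    destruct (hom1 a' Ha'1 Ha) as [_ E]. rewrite <- E, Ha'. reflexivity. }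
  intros a b [Ha ->]. split.
  - intros a' Ha'. exists (phi a'). destruct (child a a' Ha Ha'). auto.
  - intros a1 a2 Ha1 Ha2 Hne. exists (phi a1), (phi a2).
    destruct (child a a1 Ha Ha1), (child a a2 Ha Ha2).
    repeat split; auto.
    intro E. apply Hne. rewrite <- (inv1 a1), <- (inv1 a2), E; auto.
Qed.

End IsomorphismMaps.

Lemma P_iso_bisimilar (x1 x2 : X) : P_iso x1 x2 -> ~ on_cycle x1 -> bisimilar X x1 x2.
Proof.
  intros [phi [psi Hiso]] Hnc.
  pose proof Hiso as (maps1 & maps2 & inv1 & inv2 & _ & _).
  exists (fun a b => inP x1 a /\ b = phi a). split; [split|].
  - exact (P_iso_by_forth2 _ _ _ _ Hiso).
  - intros a b [Hb ->].
    apply (forth2_at_mono X (fun a b => inP x2 a /\ b = psi a)).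
    + intros u v [Hu ->]. split; [apply maps2, Hu | symmetry; apply inv2, Hu].
    + apply (P_iso_by_forth2 _ _ _ _ (P_iso_by_sym _ _ _ _ Hiso)).
      split; [apply maps1, Hb | symmetry; apply inv1, Hb].
  - split; [apply inP_refl | symmetry; exact (P_iso_by_root _ _ _ _ Hiso Hnc)].
Qed.

Lemma P_iso_siblings (x1 x2 : X) :
  op x1 = op x2 -> P_iso x1 x2 -> x1 = x2 \/ bisimilar X x1 x2.
Proof.
  intros Hop Hiso.
  destruct (classic (on_cycle x1)) as [C1|C1];
    [destruct (classic (on_cycle x2)) as [C2|C2]|].
  - left. exact (on_cycle_siblings_eq _ _ Hop C1 C2).
  - right. apply bisimilar_sym, P_iso_bisimilar; [|exact C2].
    destruct Hiso as [phi [psi H]]. exists psi, phi. exact (P_iso_by_sym x1 x2 phi psi H).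
  - right. exact (P_iso_bisimilar _ _ Hiso C1).
Qed.

Lemma star_of_bisimilar_siblings :
  (forall x1 x2 x3 : X, op x1 = op x2 -> op x1 = op x3 ->
     bisimilar X x1 x2 -> bisimilar X x1 x3 -> x1 = x2 \/ x1 = x3 \/ x2 = x3) ->
  star X.
Proof.
  intros Hthree x1 x2 x3 H12 H23 P12 P13 _.
  assert (H13 : op x1 = op x3) by congruence.
  destruct (P_iso_siblings _ _ H12 P12) as [e|B12]; [left; exact e|].
  destruct (P_iso_siblings _ _ H13 P13) as [e|B13]; [right; left; exact e|].
  exact (Hthree _ _ _ H12 H13 B12 B13).
Qed.

End IsomorphicSiblings.

Section SubalgebraBisimilarity.
Variables (X : alg) (S : X -> Prop) (cl : forall x, S x -> S (op x)) (ne : exists x, S x).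
Hypothesis dense : forall a, S a -> forth2_at X (fun w w' => bisimilar X w w' /\ S w') a a.

Local Notation Y := (subalg S cl ne).

Lemma forth2_at_subalg (s t : Y) : forth2_at Y (bisimilar Y) s t ->
  forth2_at X (fun x y => exists s' t' : Y,
      bisimilar X x (proj1_sig s') /\ bisimilar Y s' t' /\ y = proj1_sig t')
    (proj1_sig s) (proj1_sig t).
Proof.
  intros [H1 H2]. destruct (dense _ (proj2_sig s)) as [D1 D2].
  assert (lift : forall w (Sw : S w), op w = proj1_sig s -> op (exist S w Sw : Y) = s)
    by (intros w Sw Hw; apply subalg_eq; exact Hw).
  assert (down : forall t' : Y, op t' = t -> op (proj1_sig t') = proj1_sig t)
    by (intros t' <-; reflexivity).
  split.
  - intros x Hx. destruct (D1 x Hx) as [x' [Hx' [Bx Sx']]].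
    destruct (H1 _ (lift x' Sx' Hx')) as [t' [Ht' Bt']].
    exists (proj1_sig t'). split; [exact (down t' Ht')|].
    exists (exist S x' Sx'), t'. auto.
  - intros x1 x2 Hx1 Hx2 Hne.
    destruct (D2 x1 x2 Hx1 Hx2 Hne) as [x1' [x2' [Hx1' [Hx2' [Hne' [[B1 S1] [B2 S2]]]]]]].
    assert (HneY : (exist S x1' S1 : Y) <> exist S x2' S2)
      by (intro e; apply Hne'; exact (f_equal (@proj1_sig _ _) e)).
    destruct (H2 _ _ (lift x1' S1 Hx1') (lift x2' S2 Hx2') HneY)
      as [t1 [t2 [Ht1 [Ht2 [Htne [Bt1 Bt2]]]]]].
    exists (proj1_sig t1), (proj1_sig t2).
    refine (conj (down t1 Ht1) (conj (down t2 Ht2) (conj _ (conj _ _)))).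
    + intro e. apply Htne. apply subalg_eq. exact e.
    + exists (exist S x1' S1), t1. auto.
    + exists (exist S x2' S2), t2. auto.
Qed.

Lemma bisimilar_subalg (s1 s2 : Y) :
  bisimilar Y s1 s2 -> bisimilar X (proj1_sig s1) (proj1_sig s2).
Proof.
  intro H12.
  pose (Rel := fun a b => exists s t : Y,
    bisimilar X a (proj1_sig s) /\ bisimilar Y s t /\ bisimilar X (proj1_sig t) b).
  assert (Rel_sym : forall a b, Rel a b -> Rel b a).
  { intros a b [s [t [Hs [Hst Ht]]]]. exists t, s.
    repeat split; apply bisimilar_sym; assumption. }
  assert (HR : forth2 X Rel).
  { intros a b [s [t [Hs [Hst Ht]]]].
    eapply forth2_at_mono; [|exact (forth2_at_comp _ _ _ _ _ _ (bisimilar_forth _ _ _ Hs)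
       (forth2_at_comp _ _ _ _ _ _ (forth2_at_subalg _ _ (bisimilar_forth _ _ _ Hst))
          (bisimilar_forth _ _ _ Ht)))].
    intros x y [x' [Hx' [y' [[s' [t' [Hs' [Hst' ->]]]] Hy']]]].
    exists s', t'. exact (conj (bisimilar_trans _ _ _ _ Hx' Hs') (conj Hst' Hy')). }
  exists Rel. split; [split|].
  - exact HR.
  - intros a b Hba. apply (forth2_at_mono X Rel); [exact Rel_sym | exact (HR a b (Rel_sym _ _ Hba))].
  - exists s1, s2. exact (conj (bisimilar_refl _ _) (conj H12 (bisimilar_refl _ _))).
Qed.

End SubalgebraBisimilarity.

Section RetractOfEmbedding.
Variables (X Y : alg) (h : X -> Y) (p : Y -> X).
Hypotheses (h_hom : is_hom h) (h_inj : forall a b, h a = h b -> a = b)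
  (p_hom : is_hom p) (p_h : forall a, bisimilar X (p (h a)) a).

Definition image (t : Y) : Prop := exists a, t = h a.

Lemma image_op t : image t -> image (op t).
Proof. intros [a ->]. exists (op a). symmetry. apply h_hom. Qed.

Lemma image_nonempty : exists t, image t.
Proof. destruct (nonempty X) as [a]. exists (h a), a. reflexivity. Qed.

Definition preimage (t : Y) : X := epsilon (nonempty X) (fun a => t = h a).

Lemma preimage_h a : preimage (h a) = a.
Proof.
  apply h_inj. symmetry.
  exact (epsilon_spec (nonempty X) (fun b => h a = h b) (ex_intro _ a eq_refl)).
Qed.

Definition child_bisimilar_to (c z : X) : X :=
  epsilon (nonempty X) (fun w => op w = c /\ bisimilar X z w).

Lemma child_bisimilar_to_spec c z : bisimilar X c (op z) ->
  op (child_bisimilar_to c z) = c /\ bisimilar X z (child_bisimilar_to c z).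
Proof. intro H. exact (epsilon_spec _ _ (bisimilar_child X c z H)). Qed.

Fixpoint pullback (n : nat) (t : Y) : X :=
  match n with
  | 0 => preimage t
  | S n' => child_bisimilar_to (pullback n' (op t)) (p t)
  end.

Definition retraction (t : Y) : X :=
  if excluded_middle_informative (reaches Y image t) then pullback (dist Y image t) t
  else p t.

Lemma pullback_bisimilar n : forall t, reaches Y image t -> dist Y image t = n ->
  bisimilar X (p t) (pullback n t).
Proof.
  induction n as [|n IH]; intros t Ht Hd; simpl.
  - destruct (dist_0_inv _ _ t Ht Hd) as [a ->]. rewrite preimage_h. apply p_h.
  - assert (Hop : bisimilar X (pullback n (op t)) (op (p t))).
    { rewrite <- p_hom. apply bisimilar_sym, IH.
      - exact (reaches_op _ _ _ image_op Ht).
      - exact (dist_succ _ _ _ _ Ht Hd). }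
    exact (proj2 (child_bisimilar_to_spec _ _ Hop)).
Qed.

Lemma retraction_h a : retraction (h a) = a.
Proof.
  unfold retraction. destruct (excluded_middle_informative _) as [Hr|Hr].
  - rewrite (dist_0 _ _ (h a) (ex_intro _ a eq_refl)). simpl. apply preimage_h.
  - exfalso. apply Hr. exists 0, a. reflexivity.
Qed.

Lemma retraction_hom : is_hom retraction.
Proof.
  intro t. unfold retraction.
  destruct (excluded_middle_informative (reaches Y image t)) as [Ht|Ht];
    destruct (excluded_middle_informative (reaches Y image (op t))) as [Hot|Hot].
  - destruct (dist Y image t) as [|n] eqn:Hd.
    + destruct (dist_0_inv _ _ t Ht Hd) as [a ->].
      rewrite <- h_hom, (dist_0 _ _ _ (ex_intro _ (op a) eq_refl)). simpl.
      rewrite !preimage_h. reflexivity.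
    + rewrite (dist_succ _ _ _ _ Ht Hd). simpl. symmetry.
      refine (proj1 (child_bisimilar_to_spec _ _ _)).
      rewrite <- p_hom. apply bisimilar_sym, pullback_bisimilar; [exact Hot|].
      exact (dist_succ _ _ _ _ Ht Hd).
  - exfalso. exact (Hot (reaches_op _ _ _ image_op Ht)).
  - exfalso. exact (Ht (reaches_op_inv _ _ _ Hot)).
  - apply p_hom.
Qed.

Lemma image_retract : R Y X.
Proof.
  exists image, image_op, image_nonempty. split.
  - exists (fun t => h (retraction t)). split; [|split].
    + intro t. cbv beta. rewrite retraction_hom. apply h_hom.
    + intro t. exists (retraction t). reflexivity.
    + intros t [a ->]. rewrite retraction_h. reflexivity.
  - exists (fun a => exist image (h a) (ex_intro _ a eq_refl)),
      (fun s => retraction (proj1_sig s)).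
    split; [|split; [|split]].
    + intro a. apply subalg_eq. apply h_hom.
    + intro s. exact (retraction_hom (proj1_sig s)).
    + intro a. apply retraction_h.
    + intros [t [a ->]]. apply subalg_eq. simpl. rewrite retraction_h. reflexivity.
Qed.

End RetractOfEmbedding.

Lemma V_single_eq (X Y : alg) (I : Type) :
  R X Y -> R (prod_alg (fun _ : I => Y)) X ->
  forall C, V (single X) C <-> V (single Y) C.
Proof.
  intros HXY HYX C.
  split; intros HV K HK HKgen; apply HV; [exact HK| |exact HK|]; intros Z ->;
    destruct HK as [_ [Kret Kprod]].
  - exact (Kret _ _ (Kprod I (fun _ => Y) (fun _ => HKgen Y eq_refl)) HYX).
  - exact (Kret _ _ (HKgen X eq_refl) HXY).
Qed.

Section Core.
Variable A : alg.

(* A point on a cycle if there is one; otherwise an arbitrary point, whose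
   forward orbit is then a ray. *)
Definition root : A := epsilon (nonempty A) (on_cycle A).
Definition trunk (y : A) : Prop := exists n, y = iter n op root.

Lemma trunk_root : trunk root.
Proof. exists 0. reflexivity. Qed.

Lemma trunk_op y : trunk y -> trunk (op y).
Proof. intros [n ->]. exists (S n). reflexivity. Qed.

Lemma trunk_iter n y : trunk y -> trunk (iter n op y).
Proof. induction n; simpl; auto using trunk_op. Qed.

Lemma trunk_siblings_eq u v : trunk u -> trunk v -> op u = op v -> u = v.
Proof.
  assert (key : forall a b, a < b -> op (iter a op root) = op (iter b op root) ->
                  iter a op root = iter b op root).
  { intros a b Hab Hop.
    assert (Hcyc : on_cycle A root).
    { apply (epsilon_spec (nonempty A) (on_cycle A)).
      exists (iter (S a) op root), (b - a - 1). rewrite <- iter_add.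
      replace (S (b - a - 1) + S a) with (S b) by lia. symmetry. exact Hop. }
    destruct Hcyc as [p Hp].
    assert (back : forall k, iter p op (op (iter k op root)) = iter k op root).
    { intro k. change (op (iter k op root)) with (iter (S k) op root).
      rewrite <- iter_add. replace (p + S k) with (k + S p) by lia.
      rewrite iter_add, Hp. reflexivity. }
    rewrite <- (back a), <- (back b), Hop. reflexivity. }
  intros [a ->] [b ->] Hop.
  destruct (lt_eq_lt_dec a b) as [[Hlt|<-]|Hlt].
  - exact (key a b Hlt Hop).
  - reflexivity.
  - symmetry. exact (key b a Hlt (eq_sym Hop)).
Qed.

(* The trunk preimage of c is preferred, so that the trunk is never discarded. *)
Definition rep1 (c z : A) : A :=
  epsilon (nonempty A) (fun w => op w = c /\ bisimilar A z w /\
    forall u, op u = c -> bisimilar A z u -> trunk u -> u = w).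

Definition rep2 (c z : A) : A :=
  epsilon (nonempty A) (fun w => op w = c /\ bisimilar A z w /\ w <> rep1 c z).

Lemma rep1_class c z z' : bisimilar A z z' -> rep1 c z = rep1 c z'.
Proof. intro H. unfold rep1. rewrite (bisimilar_class _ _ _ H). reflexivity. Qed.

Lemma rep2_class c z z' : bisimilar A z z' -> rep2 c z = rep2 c z'.
Proof.
  intro H. unfold rep2. rewrite (rep1_class c z z' H), (bisimilar_class _ _ _ H).
  reflexivity.
Qed.

Lemma rep1_spec c z : (exists w, op w = c /\ bisimilar A z w) ->
  op (rep1 c z) = c /\ bisimilar A z (rep1 c z) /\
  forall u, op u = c -> bisimilar A z u -> trunk u -> u = rep1 c z.
Proof.
  intros [w [Hw Bw]].
  assert (Hex : exists w, op w = c /\ bisimilar A z w /\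
    forall u, op u = c -> bisimilar A z u -> trunk u -> u = w).
  { destruct (classic (exists u, op u = c /\ bisimilar A z u /\ trunk u))
      as [[u [Hu [Bu Tu]]]|N].
    - exists u. repeat split; auto. intros u' Hu' _ Tu'.
      apply trunk_siblings_eq; [exact Tu' | exact Tu | congruence].
    - exists w. repeat split; auto. intros u Hu Bu Tu. exfalso. eauto. }
  exact (epsilon_spec _ _ Hex).
Qed.

Lemma rep1_trunk c z u : op u = c -> bisimilar A z u -> trunk u -> rep1 c z = u.
Proof.
  intros Hu Bu Tu. symmetry.
  exact (proj2 (proj2 (rep1_spec c z (ex_intro _ u (conj Hu Bu)))) u Hu Bu Tu).
Qed.

Lemma rep2_spec c z : (exists w, op w = c /\ bisimilar A z w /\ w <> rep1 c z) ->
  op (rep2 c z) = c /\ bisimilar A z (rep2 c z) /\ rep2 c z <> rep1 c z.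
Proof. intro H. exact (epsilon_spec _ _ H). Qed.

Definition kept (w : A) : Prop := trunk w \/ w = rep1 (op w) w \/ w = rep2 (op w) w.
Definition core (y : A) : Prop := forall n, kept (iter n op y).

Lemma core_op y : core y -> core (op y).
Proof. intros H n. rewrite iter_succ_r. exact (H (S n)). Qed.

Lemma trunk_core y : trunk y -> core y.
Proof. intros H n. left. apply trunk_iter, H. Qed.

Lemma core_child c w : core c -> op w = c -> kept w -> core w.
Proof. intros Hc Hw Kw [|n]; [exact Kw|]. simpl. rewrite <- iter_succ_r, Hw. apply Hc. Qed.

Lemma rep1_core c z : core c -> (exists w, op w = c /\ bisimilar A z w) -> core (rep1 c z).
Proof.
  intros Hc Hex. destruct (rep1_spec c z Hex) as [Hop [Hz _]].
  apply (core_child c); [exact Hc | exact Hop |]. right; left.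
  rewrite Hop. apply rep1_class. exact Hz.
Qed.

Lemma rep2_core c z : core c ->
  (exists w, op w = c /\ bisimilar A z w /\ w <> rep1 c z) -> core (rep2 c z).
Proof.
  intros Hc Hex. destruct (rep2_spec c z Hex) as [Hop [Hz _]].
  apply (core_child c); [exact Hc | exact Hop |]. right; right.
  rewrite Hop. apply rep2_class. exact Hz.
Qed.

Lemma core_dense a : core a -> forth2_at A (fun w w' => bisimilar A w w' /\ core w') a a.
Proof.
  intro Ha.
  assert (Hself : forall w, op w = a -> exists w', op w' = a /\ bisimilar A w w')
    by (intros w Hw; exists w; split; [exact Hw | apply bisimilar_refl]).
  split.
  - intros w Hw. destruct (rep1_spec a w (Hself w Hw)) as [H1 [B1 _]].
    exists (rep1 a w). exact (conj H1 (conj B1 (rep1_core a w Ha (Hself w Hw)))).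
  - intros w1 w2 Hw1 Hw2 Hne.
    destruct (rep1_spec a w1 (Hself w1 Hw1)) as [H1 [B1 _]].
    destruct (classic (bisimilar A w1 w2)) as [B12|N12].
    + assert (Hex : exists w, op w = a /\ bisimilar A w1 w /\ w <> rep1 a w1).
      { destruct (classic (w1 = rep1 a w1)) as [e|e].
        - exists w2. repeat split; [exact Hw2 | exact B12 | congruence].
        - exists w1. repeat split; [exact Hw1 | apply bisimilar_refl | exact e]. }
      destruct (rep2_spec a w1 Hex) as [H2 [B2 Hne2]].
      exists (rep1 a w1), (rep2 a w1).
      refine (conj H1 (conj H2 (conj (not_eq_sym Hne2) (conj (conj B1 _) (conj _ _))))).
      * exact (rep1_core a w1 Ha (Hself w1 Hw1)).
      * exact (bisimilar_trans _ _ _ _ (bisimilar_sym _ _ _ B12) B2).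
      * exact (rep2_core a w1 Ha Hex).
    + destruct (rep1_spec a w2 (Hself w2 Hw2)) as [H2 [B2 _]].
      exists (rep1 a w1), (rep1 a w2).
      refine (conj H1 (conj H2 (conj _ (conj (conj B1 _) (conj B2 _))))).
      * intro e. apply N12. rewrite <- e in B2.
        exact (bisimilar_trans _ _ _ _ B1 (bisimilar_sym _ _ _ B2)).
      * exact (rep1_core a w1 Ha (Hself w1 Hw1)).
      * exact (rep1_core a w2 Ha (Hself w2 Hw2)).
Qed.

Lemma kept_rep c z x : op x = c -> kept x -> bisimilar A z x ->
  x = rep1 c z \/ x = rep2 c z.
Proof.
  intros Hx [Tx|[K|K]] Bx.
  - left. symmetry. exact (rep1_trunk c z x Hx Bx Tx).
  - left. rewrite K at 1. rewrite Hx. apply rep1_class, bisimilar_sym, Bx.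
  - right. rewrite K at 1. rewrite Hx. apply rep2_class, bisimilar_sym, Bx.
Qed.

Lemma kept_bisimilar_siblings c x1 x2 x3 :
  op x1 = c -> op x2 = c -> op x3 = c -> kept x1 -> kept x2 -> kept x3 ->
  bisimilar A x1 x2 -> bisimilar A x1 x3 -> x1 = x2 \/ x1 = x3 \/ x2 = x3.
Proof.
  intros H1 H2 H3 K1 K2 K3 B12 B13.
  destruct (kept_rep c x1 x1 H1 K1 (bisimilar_refl _ _)) as [e1|e1];
  destruct (kept_rep c x1 x2 H2 K2 B12) as [e2|e2];
  destruct (kept_rep c x1 x3 H3 K3 B13) as [e3|e3];
  first [left; congruence | right; left; congruence | right; right; congruence].
Qed.

Lemma core_nonempty : exists y, core y.
Proof. exists root. apply trunk_core, trunk_root. Qed.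

Definition core_alg : alg := subalg core core_op core_nonempty.

Lemma core_alg_star : star core_alg.
Proof.
  apply star_of_bisimilar_siblings. intros x1 x2 x3 H12 H13 B12 B13.
  assert (Hval : forall s t : core_alg, op s = op t -> op (proj1_sig s) = op (proj1_sig t))
    by (intros s t e; exact (f_equal (@proj1_sig _ _) e)).
  destruct (kept_bisimilar_siblings (op (proj1_sig x1)) _ _ _ eq_refl
    (eq_sym (Hval _ _ H12)) (eq_sym (Hval _ _ H13))
    (proj2_sig x1 0) (proj2_sig x2 0) (proj2_sig x3 0)
    (bisimilar_subalg _ _ core_op core_nonempty core_dense _ _ B12)
    (bisimilar_subalg _ _ core_op core_nonempty core_dense _ _ B13)) as [e|[e|e]];
    [left | right; left | right; right]; apply subalg_eq; exact e.
Qed.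

Definition chooser (f : A -> A -> A) : Prop :=
  forall c z, core c -> bisimilar A c (op z) ->
    op (f c z) = c /\ core (f c z) /\ bisimilar A z (f c z).

Lemma rep1_chooser : chooser rep1.
Proof.
  intros c z Hc Hcz. destruct (bisimilar_child _ _ _ Hcz) as [w Hw].
  destruct (rep1_spec c z (ex_intro _ w Hw)) as [Hop [Hb _]].
  exact (conj Hop (conj (rep1_core c z Hc (ex_intro _ w Hw)) Hb)).
Qed.

Definition keep_chooser (c z : A) : A :=
  if excluded_middle_informative (core z /\ op z = c) then z else rep1 c z.

Lemma keep_chooser_chooser : chooser keep_chooser.
Proof.
  intros c z Hc Hcz. unfold keep_chooser.
  destruct (excluded_middle_informative _) as [[Hz Hop]|_].
  - exact (conj Hop (conj Hz (bisimilar_refl _ _))).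
  - exact (rep1_chooser c z Hc Hcz).
Qed.

Definition split_chooser (v c z : A) : A :=
  if excluded_middle_informative
       (z = v /\ exists w, op w = c /\ bisimilar A z w /\ w <> rep1 c z)
  then rep2 c z else rep1 c z.

Lemma split_chooser_at v c : (exists w, op w = c /\ bisimilar A v w /\ w <> rep1 c v) ->
  split_chooser v c v = rep2 c v.
Proof.
  intro Hex. unfold split_chooser.
  destruct (excluded_middle_informative _) as [_|N]; [reflexivity|].
  exfalso. exact (N (conj eq_refl Hex)).
Qed.

Lemma split_chooser_other v c z : z <> v -> split_chooser v c z = rep1 c z.
Proof.
  intro Hz. unfold split_chooser.
  destruct (excluded_middle_informative _) as [[e _]|_]; [contradiction|reflexivity].
Qed.

Lemma split_chooser_chooser v : chooser (split_chooser v).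
Proof.
  intros c z Hc Hcz. unfold split_chooser.
  destruct (excluded_middle_informative _) as [[_ Hex]|_].
  - destruct (rep2_spec c z Hex) as [Hop [Hb _]].
    exact (conj Hop (conj (rep2_core c z Hc Hex) Hb)).
  - exact (rep1_chooser c z Hc Hcz).
Qed.

(* [y] is rebuilt from the trunk downwards, [f] choosing at each step a preimage
   bisimilar to the original one. *)
Fixpoint pull (f : A -> A -> A) (n : nat) (y : A) : A :=
  match n with 0 => y | S n' => f (pull f n' (op y)) y end.

Definition to_core (f : A -> A -> A) (y : A) : A := pull f (dist A trunk y) y.

Hypothesis hA : connected A.

Lemma reaches_trunk y : reaches A trunk y.
Proof. destruct (hA y root) as [m [n H]]. exists m. rewrite H. exists n. reflexivity. Qed.

Lemma to_core_trunk f y : trunk y -> to_core f y = y.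
Proof. intro H. unfold to_core. rewrite (dist_0 _ _ _ H). reflexivity. Qed.

Lemma to_core_succ f y n : dist A trunk y = S n -> to_core f y = f (to_core f (op y)) y.
Proof.
  intro H. unfold to_core. rewrite H, (dist_succ _ _ _ _ (reaches_trunk y) H). reflexivity.
Qed.

Lemma to_core_spec f : chooser f -> forall y, core (to_core f y) /\ bisimilar A y (to_core f y).
Proof.
  intros Hf y. remember (dist A trunk y) as n eqn:Hn. revert y Hn.
  induction n as [|n IH]; intros y Hn.
  - assert (Ty : trunk y) by exact (dist_0_inv _ _ _ (reaches_trunk y) (eq_sym Hn)).
    rewrite (to_core_trunk f y Ty). exact (conj (trunk_core y Ty) (bisimilar_refl _ _)).
  - rewrite (to_core_succ f y n (eq_sym Hn)).
    destruct (IH (op y) (eq_sym (dist_succ _ _ _ _ (reaches_trunk y) (eq_sym Hn))))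
      as [Hc Hb].
    destruct (Hf _ y Hc (bisimilar_sym _ _ _ Hb)) as [_ Hres]. exact Hres.
Qed.

Lemma to_core_hom f : chooser f -> is_hom (to_core f).
Proof.
  intros Hf y. destruct (dist A trunk y) as [|n] eqn:Hn.
  - assert (Ty : trunk y) by exact (dist_0_inv _ _ _ (reaches_trunk y) Hn).
    rewrite !to_core_trunk; auto using trunk_op.
  - rewrite (to_core_succ f y n Hn). destruct (to_core_spec f Hf (op y)) as [Hc Hb].
    symmetry. exact (proj1 (Hf _ y Hc (bisimilar_sym _ _ _ Hb))).
Qed.

Lemma to_core_iter f : chooser f ->
  forall n y, iter n op (to_core f y) = to_core f (iter n op y).
Proof.
  intros Hf n y. induction n as [|n IH]; simpl; [reflexivity|].
  rewrite IH, to_core_hom; auto.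
Qed.

Lemma to_core_eq f x y : chooser f -> to_core f x = to_core f y ->
  exists k, iter k op x = iter k op y.
Proof.
  intros Hf H.
  assert (Hfix : forall u, iter (dist A trunk u) op (to_core f u) = iter (dist A trunk u) op u).
  { intro u. rewrite to_core_iter by exact Hf.
    exact (to_core_trunk _ _ (proj1 (dist_spec _ _ _ (reaches_trunk u)))). }
  exists (dist A trunk x + dist A trunk y).
  transitivity (iter (dist A trunk x + dist A trunk y) op (to_core f y)).
  - rewrite Nat.add_comm, !iter_add, <- H, Hfix. reflexivity.
  - rewrite !iter_add, Hfix. reflexivity.
Qed.

Lemma to_core_keep y : core y -> to_core keep_chooser y = y.
Proof.
  remember (dist A trunk y) as n eqn:Hn. revert y Hn.
  induction n as [|n IH]; intros y Hn Hy.
  - apply to_core_trunk, (dist_0_inv _ _ _ (reaches_trunk y)). symmetry; exact Hn.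
  - assert (Hop : n = dist A trunk (op y))
      by (symmetry; exact (dist_succ _ _ _ _ (reaches_trunk y) (eq_sym Hn))).
    rewrite (to_core_succ _ y n (eq_sym Hn)), (IH (op y) Hop (core_op y Hy)).
    unfold keep_chooser. destruct (excluded_middle_informative _) as [_|N]; [reflexivity|].
    exfalso. exact (N (conj Hy eq_refl)).
Qed.

Lemma split_chooser_separates u v : op u = op v -> u <> v -> ~ trunk v ->
  bisimilar A u v -> to_core (split_chooser v) u <> to_core (split_chooser v) v.
Proof.
  intros Hop Hne Tv Buv.
  pose (c' := to_core (split_chooser v) (op v)).
  destruct (dist A trunk v) as [|n] eqn:Hn;
    [exfalso; exact (Tv (dist_0_inv _ _ _ (reaches_trunk v) Hn))|].
  destruct (to_core_spec _ (split_chooser_chooser v) (op v)) as [_ Bc'].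
  destruct (proj2 (bisimilar_forth _ _ _ Bc') u v Hop eq_refl Hne)
    as [b1 [b2 [Hb1 [Hb2 [Hbne [B1 B2]]]]]].
  assert (Hex : exists w, op w = c' /\ bisimilar A v w /\ w <> rep1 c' v).
  { destruct (classic (b1 = rep1 c' v)) as [e|e].
    - exists b2. repeat split; [exact Hb2 | exact B2 | congruence].
    - exists b1. repeat split; [exact Hb1 | | exact e].
      exact (bisimilar_trans _ _ _ _ (bisimilar_sym _ _ _ Buv) B1). }
  assert (Hv : to_core (split_chooser v) v = rep2 c' v)
    by (rewrite (to_core_succ _ v n Hn); exact (split_chooser_at v c' Hex)).
  assert (Hu : to_core (split_chooser v) u = rep1 c' v).
  { destruct (classic (trunk u)) as [Tu|Tu].
    - assert (Tc : trunk (op v)) by (rewrite <- Hop; exact (trunk_op u Tu)).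
      unfold c'. rewrite (to_core_trunk _ u Tu), (to_core_trunk _ _ Tc). symmetry.
      exact (rep1_trunk _ _ _ Hop (bisimilar_sym _ _ _ Buv) Tu).
    - destruct (dist A trunk u) as [|m] eqn:Hm;
        [exfalso; exact (Tu (dist_0_inv _ _ _ (reaches_trunk u) Hm))|].
      rewrite (to_core_succ _ u m Hm), Hop, (split_chooser_other _ _ _ Hne).
      apply rep1_class, Buv. }
  rewrite Hu, Hv. exact (not_eq_sym (proj2 (proj2 (rep2_spec _ _ Hex)))).
Qed.

Lemma siblings_separate u v : op u = op v -> u <> v ->
  exists f, chooser f /\ to_core f u <> to_core f v.
Proof.
  intros Hop Hne. destruct (classic (bisimilar A u v)) as [Buv|Nuv].
  - destruct (classic (trunk v)) as [Tv|Tv].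
    + assert (Tu : ~ trunk u) by (intro Tu; exact (Hne (trunk_siblings_eq _ _ Tu Tv Hop))).
      exists (split_chooser u). split; [apply split_chooser_chooser|]. apply not_eq_sym.
      exact (split_chooser_separates _ _ (eq_sym Hop) (not_eq_sym Hne) Tu
        (bisimilar_sym _ _ _ Buv)).
    + exists (split_chooser v).
      exact (conj (split_chooser_chooser v) (split_chooser_separates _ _ Hop Hne Tv Buv)).
  - exists keep_chooser. split; [exact keep_chooser_chooser|]. intro e. apply Nuv.
    destruct (to_core_spec _ keep_chooser_chooser u) as [_ Bu].
    destruct (to_core_spec _ keep_chooser_chooser v) as [_ Bv].
    rewrite e in Bu. exact (bisimilar_trans _ _ _ _ Bu (bisimilar_sym _ _ _ Bv)).
Qed.

Lemma choosers_separate x y : x <> y -> exists f, chooser f /\ to_core f x <> to_core f y.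
Proof.
  intro Hxy.
  destruct (classic (exists k, iter k op x = iter k op y)) as [Hk|Hk].
  2: { exists keep_chooser. split; [exact keep_chooser_chooser|].
       intro e. exact (Hk (to_core_eq _ _ _ keep_chooser_chooser e)). }
  destruct (least_nat_spec _ Hk) as [Hmeet Hmin]. revert Hmeet Hmin.
  generalize (least_nat (fun k => iter k op x = iter k op y)).
  intros [|k] Hmeet Hmin; [contradiction|].
  assert (Hne : iter k op x <> iter k op y) by (intro e; specialize (Hmin k e); lia).
  destruct (siblings_separate _ _ Hmeet Hne) as [f [Hf Hsep]].
  exists f. split; [exact Hf|]. intro e. apply Hsep.
  rewrite <- !(to_core_iter f Hf), e. reflexivity.
Qed.

Definition chooser_index : Type := {f : A -> A -> A | chooser f}.
Definition core_power : alg := prod_alg (fun _ : chooser_index => core_alg).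

Definition core_embed (a : A) : core_power :=
  fun i => exist core (to_core (proj1_sig i) a) (proj1 (to_core_spec _ (proj2_sig i) a)).

Definition keep_index : chooser_index := exist _ keep_chooser keep_chooser_chooser.

Lemma core_embed_hom : is_hom core_embed.
Proof.
  intro a. apply functional_extensionality_dep. intro i. apply subalg_eq.
  exact (to_core_hom _ (proj2_sig i) a).
Qed.

Lemma core_embed_inj a b : core_embed a = core_embed b -> a = b.
Proof.
  intro H. apply NNPP. intro Hne. destruct (choosers_separate a b Hne) as [f [Hf Hsep]].
  apply Hsep. exact (f_equal (fun t : core_power => proj1_sig (t (exist _ f Hf))) H).
Qed.

Lemma core_retract : R A core_alg.
Proof.
  exists core, core_op, core_nonempty. split.
  - exists (to_core keep_chooser). split; [|split].
    + exact (to_core_hom _ keep_chooser_chooser).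
    + intro y. exact (proj1 (to_core_spec _ keep_chooser_chooser y)).
    + exact to_core_keep.
  - exists (fun x => x), (fun x => x). repeat split; intro; reflexivity.
Qed.

Lemma power_retract : R core_power A.
Proof.
  apply (image_retract A core_power core_embed (fun t => proj1_sig (t keep_index))).
  - exact core_embed_hom.
  - exact core_embed_inj.
  - intro t. reflexivity.
  - intro a. exact (bisimilar_sym _ _ _ (proj2 (to_core_spec _ keep_chooser_chooser a))).
Qed.

Lemma core_alg_connected : connected core_alg.
Proof.
  intros x y. destruct (hA (proj1_sig x) (proj1_sig y)) as [m [n H]].
  exists m, n. apply subalg_eq. unfold core_alg. rewrite !subalg_iter. exact H.
Qed.

End Core.

Theorem lemma4p4 (A : alg) (hA : connected A) :
  exists B : alg, R A B /\ Ustar_c B /\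
    (forall C : alg, V (single A) C <-> V (single B) C).
Proof.
  exists (core_alg A). split; [|split].
  - exact (core_retract A hA).
  - exact (conj (core_alg_connected A hA) (core_alg_star A)).
  - exact (V_single_eq _ _ (chooser_index A) (core_retract A hA) (power_retract A hA)).
Qed.
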